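(* Let $I\subseteq\mathbb{R}$ be an open interval (possibly unbounded), $\Sigma=I\times\mathbb{R}$, and let $h\ge1$, $L\ge1$ be integers. Let $F\in C^\omega(\Sigma,\mathbb{R}^2)$ be a non-singular map of the form $F(x,y)=\Big(\sum_{l=1}^L p_{2hl}(x)y^{2hl}+p_1(x)y+p_0(x),\;q_{2h}(x)y^{2h}+q_0(x)\Big)$. If $p_1(x)\neq0$ for all $x\in I$, then $F$ is injective.
   Context: For $F=(P,Q)$, $d_F=P_xQ_y-P_yQ_x$ is the Jacobian determinant; $F$ is non-singular if $d_F(x,y)\neq0$ for all $(x,y)\in\Sigma$. $C^\omega$ denotes real analytic. *)

From Stdlib Require Import Reals.
From Coquelicot Require Import Coquelicot.
Open Scope R_scope.

Definition in_open_interval (a b : Rbar) (x : R) : Prop :=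
  Rbar_lt a x /\ Rbar_lt x b.

Definition analytic2_at (f : R -> R -> R) (a b : R) : Prop :=
  exists (c : nat -> nat -> R) (r : R), 0 < r /\
    forall x y, Rabs (x - a) < r -> Rabs (y - b) < r ->
      (exists M : R, forall N : nat,
          sum_f_R0 (fun i => sum_f_R0 (fun j =>
             Rabs (c i j) * Rabs (x - a) ^ i * Rabs (y - b) ^ j) N) N <= M) /\
      is_lim_seq (fun N : nat =>
          sum_f_R0 (fun i => sum_f_R0 (fun j =>
             c i j * (x - a) ^ i * (y - b) ^ j) N) N) (f x y).

Definition analytic_on_strip (a b : Rbar) (f : R -> R -> R) : Prop :=
  forall x y, in_open_interval a b x -> analytic2_at f x y.

Definition jacobian_det (P Q : R -> R -> R) (x y : R) : R :=
  Derive (fun t => P t y) x * Derive (fun t => Q x t) y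
  - Derive (fun t => P x t) y * Derive (fun t => Q t y) x.

From Stdlib Require Import Reals Lra Lia Psatz.
From Coquelicot Require Import Coquelicot.
Open Scope R_scope.

(* With [n = 2h], [P = G(x, y^n) + p1 y] and [Q = q y^n + q0], where [G] is polynomial in its
   second argument. Analyticity is only used to make the x-slices of [P] and [Q], and hence all
   coefficient functions, differentiable.

   The Jacobian [J] is continuous in [y] and never zero, so it has a constant sign on each
   vertical line. Since [J(x, 0) = -p1 q0'] and [J(x, y) + J(x, -y) = -2 W(x, y^n)] with [W]
   affine in [y^n], the derivative [q0'] has a constant sign and, in the coordinate
   [t = (p1 y)^n], the function [Q = (q / p1^n) t + q0] is strictly monotone in [x] for every
   fixed [t >= 0].

   On a vertical line injectivity is elementary: either [P(x, .)] is monotone, or [Q] fixes [y]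
   up to sign and the odd term [p1 y] tells [y] from [-y]. If [x1 < x2] lie on a common level
   set [Q = c], monotonicity shows that over [[x1, x2]] this level set consists of the two
   branches [y = +/- t(x)^(1/n) / p1(x)] with [t > 0] inside. Along a branch [dQ = 0], so
   [J = Q_y * d/dx P]; as [Q_y] is odd in [y] while [J] has the same sign at [y] and [-y], [P]
   increases along one branch and decreases along the other. The two branch values being
   ordered at both ends, [P] cannot agree at [(x1, y1)] and [(x2, y2)]. *)

(** * Calculus on real intervals *)

Lemma in_open_interval_locally (a b : Rbar) (x : R) :
  in_open_interval a b x -> locally x (in_open_interval a b).
Proof.
  apply (open_and (T := R_UniformSpace) (fun t : R => Rbar_lt a t) (fun t : R => Rbar_lt t b)).
  - apply open_Rbar_gt.
  - apply open_Rbar_lt.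
Qed.

Lemma in_open_interval_between (a b : Rbar) (x z w : R) :
  in_open_interval a b x -> in_open_interval a b z -> x <= w <= z ->
  in_open_interval a b w.
Proof.
  intros [Hax _] [_ Hzb] [Hxw Hwz]; split.
  - now apply (Rbar_lt_le_trans _ x).
  - now apply (Rbar_le_lt_trans _ z).
Qed.

Lemma ex_derive_ext_interval (a b : Rbar) (f g : R -> R) (x : R) :
  in_open_interval a b x -> (forall t, in_open_interval a b t -> f t = g t) ->
  ex_derive f x -> ex_derive g x.
Proof.
  intros Hx Hfg. apply (ex_derive_ext_loc (V := R_NormedModule)).
  exact (filter_imp _ _ Hfg (in_open_interval_locally a b x Hx)).
Qed.

Lemma is_derive_ext_interval (a b : Rbar) (f g : R -> R) (x l : R) :
  in_open_interval a b x -> (forall t, in_open_interval a b t -> f t = g t) ->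
  is_derive f x l -> is_derive g x l.
Proof.
  intros Hx Hfg. apply (is_derive_ext_loc (V := R_NormedModule)).
  exact (filter_imp _ _ Hfg (in_open_interval_locally a b x Hx)).
Qed.

Lemma continuity_pt_is_derive (f : R -> R) (x l : R) :
  is_derive f x l -> continuity_pt f x.
Proof.
  intros Hf. apply continuity_pt_filterlim, (ex_derive_continuous (V := R_NormedModule)).
  now exists l.
Qed.

Lemma continuous_nonzero_same_sign (g : R -> R) :
  (forall y, continuity_pt g y) -> (forall y, g y <> 0) -> forall y z, 0 < g y * g z.
Proof.
  intros Hc Hnz y z.
  destruct (Rlt_dec 0 (g y * g z)) as [Hpos | Hneg]; [exact Hpos | exfalso].
  destruct (IVT_gen g y z 0 Hc) as [w [_ Hw]].
  - pose proof (Hnz y); pose proof (Hnz z).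
    unfold Rmin, Rmax; destruct Rle_dec; split; nra.
  - exact (Hnz w Hw).
Qed.

Lemma is_derive_pos_increasing_near (g : R -> R) (x l : R) :
  is_derive g x l -> 0 < l ->
  exists d, 0 < d /\ forall k, 0 < k < d -> g (x - k) < g x /\ g x < g (x + k).
Proof.
  intros Hg Hl. apply is_derive_Reals in Hg.
  destruct (Hg l Hl) as [d Hd]. exists d; split; [apply cond_pos |].
  intros k Hk.
  assert (Hleft : Rabs ((g (x + - k) - g x) / - k - l) < l).
  { apply Hd; [lra | rewrite Rabs_Ropp, Rabs_pos_eq; lra]. }
  assert (Hright : Rabs ((g (x + k) - g x) / k - l) < l).
  { apply Hd; [lra | rewrite Rabs_pos_eq; lra]. }
  apply Rabs_def2 in Hleft, Hright.
  assert (Ql : 0 < (g (x + - k) - g x) / - k) by lra.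
  assert (Qr : 0 < (g (x + k) - g x) / k) by lra.
  replace (x - k) with (x + - k) by ring.
  assert (g x - g (x + - k) = (g (x + - k) - g x) / - k * k) by (field; lra).
  assert (g (x + k) - g x = (g (x + k) - g x) / k * k) by (field; lra).
  split; nra.
Qed.

(* Darboux: [g] attains its maximum on [[x, z]] at some [M], and [dg M] can have no sign. *)
Lemma derive_no_sign_change (g dg : R -> R) (x z : R) :
  x < z -> (forall w, x <= w <= z -> is_derive g w (dg w)) ->
  (forall w, x <= w <= z -> dg w <> 0) -> 0 < dg x -> 0 <= dg z.
Proof.
  intros Hxz Hd Hnz Hx. destruct (Rle_dec 0 (dg z)) as [Hz | Hz]; [exact Hz | exfalso].
  destruct (continuity_ab_maj g x z) as [M [HM [HxM HMz]]]; [lra | |].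
  { intros w Hw. eapply continuity_pt_is_derive, Hd, Hw. }
  assert (HdM := Hnz M (conj HxM HMz)).
  destruct (Rtotal_order (dg M) 0) as [Hneg | [Hzero | Hpos]]; [| exact (HdM Hzero) |].
  - assert (HxM' : x < M) by (destruct HxM as [| <-]; lra).
    destruct (is_derive_pos_increasing_near (fun t => - g t) M (- dg M)) as [d [Hd0 Hinc]].
    { apply (is_derive_opp g), Hd; lra. }
    { lra. }
    set (k := Rmin (d / 2) ((M - x) / 2)).
    assert (Hk : 0 < k < d)
      by (unfold k; split; [apply Rmin_glb_lt | eapply Rle_lt_trans; [apply Rmin_l |]]; lra).
    assert (Hkx : k <= (M - x) / 2) by apply Rmin_r.
    destruct (Hinc k Hk) as [Hlt _]. pose proof (HM (M - k)). lra.
  - assert (HMz' : M < z) by (destruct HMz as [| ->]; lra).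
    destruct (is_derive_pos_increasing_near g M (dg M)) as [d [Hd0 Hinc]]; [apply Hd; lra | lra |].
    set (k := Rmin (d / 2) ((z - M) / 2)).
    assert (Hk : 0 < k < d)
      by (unfold k; split; [apply Rmin_glb_lt | eapply Rle_lt_trans; [apply Rmin_l |]]; lra).
    assert (Hkz : k <= (z - M) / 2) by apply Rmin_r.
    destruct (Hinc k Hk) as [_ Hlt]. pose proof (HM (M + k)). lra.
Qed.

Lemma derive_nonzero_same_sign (g dg : R -> R) (D : R -> Prop) :
  (forall x z w, D x -> D z -> x <= w <= z -> D w) ->
  (forall x, D x -> is_derive g x (dg x)) -> (forall x, D x -> dg x <> 0) ->
  forall x z, D x -> D z -> 0 < dg x * dg z.
Proof.
  intros Hconv Hd Hnz.
  assert (Hlt : forall x z, D x -> D z -> x < z -> 0 < dg x * dg z).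
  { intros x z Hx Hz Hxz.
    assert (Hdxz : forall w, x <= w <= z -> is_derive g w (dg w))
      by (intros w Hw; apply Hd, (Hconv x z); auto).
    assert (Hnxz : forall w, x <= w <= z -> dg w <> 0)
      by (intros w Hw; apply Hnz, (Hconv x z); auto).
    assert (Hopp : forall w, x <= w <= z -> is_derive (fun t => - g t) w (- dg w))
      by (intros w Hw; apply (is_derive_opp g), Hdxz, Hw).
    pose proof (Hnz x Hx); pose proof (Hnz z Hz).
    destruct (Rtotal_order (dg x) 0) as [Hneg | [Hzero | Hpos]]; [| contradiction |].
    - pose proof (derive_no_sign_change _ (fun t => - dg t) x z Hxz Hopp
                    ltac:(intros w Hw; specialize (Hnxz w Hw); lra) ltac:(lra)).
      nra.
    - pose proof (derive_no_sign_change g dg x z Hxz Hdxz Hnxz Hpos). nra. }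
  intros x z Hx Hz. destruct (Rtotal_order x z) as [Hxz | [<- | Hzx]].
  - now apply Hlt.
  - pose proof (Hnz x Hx). nra.
  - rewrite Rmult_comm. now apply Hlt.
Qed.

Lemma strict_mono_derive_sign (g dg : R -> R) (u w s : R) :
  u < w -> (forall t, u < t < w -> is_derive g t (dg t)) ->
  (forall t, u <= t <= w -> continuity_pt g t) -> (forall t, u < t < w -> 0 < s * dg t) ->
  0 < s * (g w - g u).
Proof.
  intros Huw Hd Hc Hs.
  (* the slope is extended by [s] outside [(u, w)], where [MVT_gen] may also land *)
  destruct (MVT_gen g u w (fun t => if Rlt_dec u t then if Rlt_dec t w then dg t else s else s))
    as [c [Hc' Hmvt]]; rewrite ?Rmin_left, ?Rmax_right in * by lra.
  - intros t Ht. destruct (Rlt_dec u t); [| lra]. destruct (Rlt_dec t w); [| lra]. now apply Hd.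
  - exact Hc.
  - rewrite Hmvt.
    assert (Hsc : 0 < s * (if Rlt_dec u c then if Rlt_dec c w then dg c else s else s)).
    { pose proof (Hs ((u + w) / 2) ltac:(lra)).
      destruct (Rlt_dec u c); [destruct (Rlt_dec c w); [apply Hs; lra |] |]; nra. }
    nra.
Qed.

(** * Even powers and n-th roots *)

Lemma pow_even_opp (y : R) (h : nat) : (- y) ^ (2 * h) = y ^ (2 * h).
Proof. rewrite !pow_sqr. f_equal. ring. Qed.

Lemma pow_even_nonneg (y : R) (h : nat) : 0 <= y ^ (2 * h).
Proof. rewrite pow_sqr. apply pow_le. nra. Qed.

Lemma pow_even_abs (y : R) (h : nat) : Rabs y ^ (2 * h) = y ^ (2 * h).
Proof. rewrite RPow_abs. apply Rabs_pos_eq, pow_even_nonneg. Qed.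

Lemma pow_pred_even_opp (y : R) (h : nat) :
  (1 <= h)%nat -> (- y) ^ pred (2 * h) = - y ^ pred (2 * h).
Proof.
  intros Hh. replace (pred (2 * h)) with (S (2 * (h - 1))) by lia.
  replace (- y) with (-1 * y) by ring. rewrite Rpow_mult_distr, pow_1_odd. ring.
Qed.

Lemma pow_pred_mul (y : R) (m : nat) : (1 <= m)%nat -> y * y ^ pred m = y ^ m.
Proof. destruct m; [lia | reflexivity]. Qed.

Definition nth_root (n : nat) (t : R) : R :=
  if Rle_dec t 0 then 0 else Rpower t (/ INR n).

Lemma nth_root_nonneg (n : nat) (t : R) : 0 <= nth_root n t.
Proof. unfold nth_root. destruct Rle_dec; [lra | left; apply exp_pos]. Qed.

Lemma pow_nth_root (n : nat) (t : R) : (1 <= n)%nat -> 0 <= t -> nth_root n t ^ n = t.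
Proof.
  intros Hn Ht. unfold nth_root. destruct Rle_dec.
  - replace t with 0 by lra. apply pow_i; lia.
  - rewrite <- Rpower_pow by apply exp_pos.
    rewrite Rpower_mult, Rinv_l by (apply not_0_INR; lia). apply Rpower_1; lra.
Qed.

Lemma nth_root_pow (n : nat) (y : R) : (1 <= n)%nat -> 0 <= y -> nth_root n (y ^ n) = y.
Proof.
  intros Hn [Hy | <-]; unfold nth_root.
  - pose proof (pow_lt y n Hy). destruct Rle_dec; [lra |].
    rewrite <- (Rpower_pow n y Hy), Rpower_mult, Rinv_r by (apply not_0_INR; lia).
    now apply Rpower_1.
  - rewrite pow_i by lia. destruct Rle_dec; lra.
Qed.

Lemma ex_derive_nth_root (n : nat) (t : R) : 0 < t -> ex_derive (nth_root n) t.
Proof.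
  intros Ht.
  apply (ex_derive_ext_loc (V := R_NormedModule) (fun s => exp (/ INR n * ln s))).
  - apply (filter_imp (fun s : R => Rbar_lt 0 s)).
    + intros s Hs. unfold nth_root. simpl in Hs. destruct Rle_dec; [lra | reflexivity].
    + now apply (open_Rbar_gt (Finite 0)).
  - auto_derive. lra.
Qed.

Lemma continuity_nth_root (n : nat) (t : R) :
  (1 <= n)%nat -> 0 <= t -> continuity_pt (nth_root n) t.
Proof.
  intros Hn [Ht | <-].
  - destruct (ex_derive_nth_root n t Ht) as [l Hl]. exact (continuity_pt_is_derive _ _ _ Hl).
  - intros eps Heps. exists (eps ^ n). split; [now apply pow_lt |].
    intros s [_ Hs]. simpl in *. unfold R_dist in *.
    unfold nth_root at 2. destruct Rle_dec; [| lra].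
    rewrite Rminus_0_r, Rabs_pos_eq by apply nth_root_nonneg.
    rewrite Rminus_0_r in Hs.
    destruct (Rle_dec s 0). { unfold nth_root. destruct Rle_dec; lra. }
    destruct (Rlt_dec (nth_root n s) eps) as [Hlt | Hge]; [exact Hlt | exfalso].
    assert (Hpow : eps ^ n <= nth_root n s ^ n) by (apply pow_incr; lra).
    rewrite pow_nth_root in Hpow by (lia || lra). rewrite Rabs_pos_eq in Hs by lra. lra.
Qed.

(** * Slices of analytic functions *)

Lemma sum_f_R0_pow_zero (g : nat -> R) (N : nat) : sum_f_R0 (fun j => g j * 0 ^ j) N = g O.
Proof. induction N as [| N IH]; simpl; [ring | rewrite IH; ring]. Qed.

Lemma analytic2_at_ex_derive_slice (f : R -> R -> R) (x0 y0 : R) :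
  analytic2_at f x0 y0 -> ex_derive (fun x => f x y0) x0.
Proof.
  intros [c [r [Hr Hf]]].
  set (a := fun i => c i O).
  assert (Hy0 : Rabs (y0 - y0) < r) by (rewrite Rminus_diag, Rabs_R0; lra).
  assert (Hsum : forall x N,
    sum_f_R0 (fun i => sum_f_R0 (fun j => c i j * (x - x0) ^ i * (y0 - y0) ^ j) N) N
    = sum_f_R0 (fun i => a i * (x - x0) ^ i) N).
  { intros x N. apply sum_eq. intros i _. rewrite Rminus_diag.
    exact (sum_f_R0_pow_zero (fun j => c i j * (x - x0) ^ i) N). }
  assert (Habs : forall x N,
    sum_f_R0 (fun i => sum_f_R0 (fun j =>
      Rabs (c i j) * Rabs (x - x0) ^ i * Rabs (y0 - y0) ^ j) N) N
    = sum_f_R0 (fun i => Rabs (a i) * Rabs (x - x0) ^ i) N).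
  { intros x N. apply sum_eq. intros i _. rewrite Rminus_diag, Rabs_R0.
    exact (sum_f_R0_pow_zero (fun j => Rabs (c i j) * Rabs (x - x0) ^ i) N). }
  assert (Hradius : Rbar_lt (Rabs 0) (CV_radius a)).
  { assert (Hx : Rabs (x0 + r / 2 - x0) = r / 2)
      by (replace (x0 + r / 2 - x0) with (r / 2) by ring; apply Rabs_pos_eq; lra).
    destruct (Hf (x0 + r / 2) y0) as [[M HM] _]; [rewrite Hx; lra | exact Hy0 |].
    apply (Rbar_lt_le_trans _ (r / 2)); [rewrite Rabs_R0; simpl; lra |].
    apply (proj1 (CV_radius_bounded a)). exists M. intros N.
    specialize (HM N). rewrite Habs, Hx in HM.
    rewrite Rabs_mult, <- RPow_abs, (Rabs_pos_eq (r / 2)) by lra.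
    eapply Rle_trans; [| exact HM].
    destruct N as [| N]; cbn [sum_f_R0]; [lra |].
    enough (0 <= sum_f_R0 (fun i => Rabs (a i) * (r / 2) ^ i) N) by lra.
    apply cond_pos_sum. intros i. apply Rmult_le_pos; [apply Rabs_pos | apply pow_le; lra]. }
  assert (Hseries : locally x0 (fun x => PSeries a (x - x0) = f x y0)).
  { exists (mkposreal r Hr). intros x Hx.
    apply is_pseries_unique, is_pseries_R.
    apply (filterlim_ext (fun N => sum_f_R0 (fun i => a i * (x - x0) ^ i) N)).
    { intros N. now rewrite sum_n_Reals. }
    exact (is_lim_seq_ext _ _ (f x y0) (Hsum x) (proj2 (Hf x y0 Hx Hy0))). }
  apply (ex_derive_ext_loc (V := R_NormedModule) _ _ x0 Hseries).
  auto_derive. rewrite Rplus_opp_r. now apply ex_derive_PSeries.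
Qed.

(** * Polynomials whose coefficients depend on a parameter *)

Definition fpoly (c : nat -> R -> R) (d : nat) (x s : R) : R :=
  sum_f_R0 (fun l => c l x * s ^ l) d.

Definition fpoly_ds (c : nat -> R -> R) (d : nat) (x s : R) : R :=
  sum_f_R0 (fun l => c l x * (INR l * s ^ pred l)) d.

Lemma is_derive_scal_pow (k : R) (l : nat) (s : R) :
  is_derive (fun s => k * s ^ l) s (k * (INR l * s ^ pred l)).
Proof. auto_derive; [exact I | ring]. Qed.

Lemma is_derive_mult_pow (f S : R -> R) (l : nat) (x df dS : R) :
  is_derive f x df -> is_derive S x dS ->
  is_derive (fun t => f t * S t ^ l) x (df * S x ^ l + f x * (INR l * S x ^ pred l) * dS).
Proof.
  intros Hf HS.
  replace (df * S x ^ l + f x * (INR l * S x ^ pred l) * dS)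
    with (df * S x ^ l + f x * (INR l * dS * S x ^ pred l)) by ring.
  apply (is_derive_mult f (fun t => S t ^ l));
    [exact Hf | apply is_derive_pow, HS | apply Rmult_comm].
Qed.

Lemma is_derive_fpoly_s (c : nat -> R -> R) (d : nat) (x s : R) :
  is_derive (fun s => fpoly c d x s) s (fpoly_ds c d x s).
Proof.
  unfold fpoly, fpoly_ds. induction d as [| d IH]; cbn [sum_f_R0].
  - apply is_derive_scal_pow.
  - apply (is_derive_plus (fun s => sum_f_R0 (fun l => c l x * s ^ l) d));
      [exact IH | apply is_derive_scal_pow].
Qed.

Lemma ex_derive_fpoly_ds (c : nat -> R -> R) (d : nat) (x s : R) :
  ex_derive (fun s => fpoly_ds c d x s) s.
Proof.
  unfold fpoly_ds. induction d as [| d IH]; cbn [sum_f_R0].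
  - auto_derive. exact I.
  - apply (ex_derive_plus (fun s => sum_f_R0 (fun l => c l x * (INR l * s ^ pred l)) d));
      [exact IH |].
    auto_derive. exact I.
Qed.

Lemma is_derive_fpoly_comp (c : nat -> R -> R) (d : nat) (x0 : R) (S : R -> R) (dS : R) :
  (forall l, (l <= d)%nat -> ex_derive (c l) x0) -> is_derive S x0 dS ->
  is_derive (fun x => fpoly c d x (S x)) x0
    (fpoly (fun l => Derive (c l)) d x0 (S x0) + fpoly_ds c d x0 (S x0) * dS).
Proof.
  intros Hc HS.
  assert (Hterm : forall l, (l <= d)%nat -> is_derive (fun x => c l x * S x ^ l) x0
            (Derive (c l) x0 * S x0 ^ l + c l x0 * (INR l * S x0 ^ pred l) * dS))
    by (intros l Hl; apply is_derive_mult_pow; [apply Derive_correct, Hc |]; auto).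
  replace (fpoly (fun l => Derive (c l)) d x0 (S x0) + fpoly_ds c d x0 (S x0) * dS)
    with (sum_f_R0 (fun l => Derive (c l) x0 * S x0 ^ l
                             + c l x0 * (INR l * S x0 ^ pred l) * dS) d).
  - unfold fpoly. induction d as [| d IH]; cbn [sum_f_R0]; [apply Hterm; lia |].
    apply (is_derive_plus (fun x => sum_f_R0 (fun l => c l x * S x ^ l) d)).
    + apply IH; intros l Hl; [apply Hc | apply Hterm]; lia.
    + apply Hterm. lia.
  - unfold fpoly, fpoly_ds. clear.
    induction d as [| d IH]; cbn [sum_f_R0]; [ring | rewrite IH; ring].
Qed.

Lemma fpoly_double (c : nat -> R -> R) (d : nat) (x s : R) :
  fpoly c (S d) x (2 * s) - 2 ^ S d * fpoly c (S d) x s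
  = fpoly (fun l x => (2 ^ l - 2 ^ S d) * c l x) d x s.
Proof.
  assert (Hlow : forall K, fpoly c d x (2 * s) - K * fpoly c d x s
                           = fpoly (fun l x => (2 ^ l - K) * c l x) d x s).
  { intros K. unfold fpoly. induction d as [| d IH]; cbn [sum_f_R0].
    - simpl. ring.
    - rewrite <- IH, Rpow_mult_distr. ring. }
  unfold fpoly at 1 2. cbn [sum_f_R0]. fold (fpoly c d x (2 * s)) (fpoly c d x s).
  rewrite <- Hlow, Rpow_mult_distr. ring.
Qed.

(* Induction on [d]: [fpoly c (S d) x (2 s) - 2 ^ S d * fpoly c (S d) x s] drops the top
   coefficient and rescales the others by nonzero factors ([fpoly_double]). *)
Lemma fpoly_coef_ex_derive (c : nat -> R -> R) (d : nat) (x0 : R) :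
  (forall s, 0 < s -> ex_derive (fun x => fpoly c d x s) x0) ->
  forall l, (l <= d)%nat -> ex_derive (c l) x0.
Proof.
  revert c. induction d as [| d IH]; intros c Hc l Hl.
  - replace l with O by lia.
    apply (ex_derive_ext (fun x => fpoly c 0 x 1)); [intros t; unfold fpoly; simpl; ring |].
    apply Hc; lra.
  - assert (Hlow : forall l, (l <= d)%nat -> ex_derive (c l) x0).
    { intros k Hk.
      assert (Hgap : 2 ^ k - 2 ^ S d <> 0)
        by (enough (2 ^ k < 2 ^ S d) by lra; apply Rlt_pow; [lra | lia]).
      apply (ex_derive_ext (fun x => / (2 ^ k - 2 ^ S d) * ((2 ^ k - 2 ^ S d) * c k x)));
        [intros t; simpl; field; exact Hgap |].
      apply ex_derive_scal.
      apply (IH (fun l x => (2 ^ l - 2 ^ S d) * c l x)); [| exact Hk].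
      intros s Hs.
      apply (ex_derive_ext (fun x => fpoly c (S d) x (2 * s) - 2 ^ S d * fpoly c (S d) x s));
        [intros t; apply fpoly_double |].
      apply (ex_derive_minus (fun x => fpoly c (S d) x (2 * s)));
        [apply Hc; lra | apply ex_derive_scal, Hc, Hs]. }
    destruct (Nat.le_gt_cases l d) as [Hld | Hld]; [now apply Hlow |].
    replace l with (S d) by lia.
    apply (ex_derive_ext (fun x => fpoly c (S d) x 1 - fpoly c d x 1));
      [intros t; unfold fpoly; simpl; rewrite pow1; ring |].
    apply (ex_derive_minus (fun x => fpoly c (S d) x 1)); [apply Hc; lra |].
    eexists. apply (is_derive_fpoly_comp c d x0 (fun _ => 1) 0);
      [exact Hlow | apply (is_derive_const (V := R_NormedModule))].
Qed.

(** * Maps of the form (G(x, y^n) + p1 x y, q x y^n + q0 x) *)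

Section Strip.

Variables (a b : Rbar) (h L : nat) (e : nat -> R -> R) (p1 q q0 : R -> R) (P Q : R -> R -> R).

Local Notation I := (in_open_interval a b).
Local Notation n := (2 * h)%nat.

Hypothesis h_pos : (1 <= h)%nat.
Hypothesis P_eq : forall x y, I x -> P x y = fpoly e L x (y ^ n) + p1 x * y.
Hypothesis Q_eq : forall x y, I x -> Q x y = q x * y ^ n + q0 x.
Hypothesis p1_nz : forall x, I x -> p1 x <> 0.
Hypothesis P_slice : forall x y, I x -> ex_derive (fun t => P t y) x.
Hypothesis Q_slice : forall x y, I x -> ex_derive (fun t => Q t y) x.

Lemma coef_ex_derive (x : R) (l : nat) : I x -> (l <= L)%nat -> ex_derive (e l) x.
Proof.
  intros Hx. apply fpoly_coef_ex_derive. intros s Hs.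
  set (y := nth_root n s).
  apply (ex_derive_ext_interval a b (fun t => (P t y + P t (- y)) / 2)); [exact Hx | |].
  - intros t Ht. rewrite !P_eq, pow_even_opp by exact Ht.
    unfold y. rewrite pow_nth_root by (lia || lra). field.
  - auto_derive. now repeat split; apply P_slice.
Qed.

Lemma p1_ex_derive (x : R) : I x -> ex_derive p1 x.
Proof.
  intros Hx. apply (ex_derive_ext_interval a b (fun t => (P t 1 - P t (- 1)) / 2)); [exact Hx | |].
  - intros t Ht. rewrite !P_eq, pow_1_even, pow1 by exact Ht. field.
  - auto_derive. now repeat split; apply P_slice.
Qed.

Lemma q0_ex_derive (x : R) : I x -> ex_derive q0 x.
Proof.
  intros Hx. apply (ex_derive_ext_interval a b (fun t => Q t 0)); [exact Hx | | now apply Q_slice].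
  intros t Ht. rewrite Q_eq, pow_i by (exact Ht || lia). ring.
Qed.

Lemma q_ex_derive (x : R) : I x -> ex_derive q x.
Proof.
  intros Hx. apply (ex_derive_ext_interval a b (fun t => Q t 1 - Q t 0)); [exact Hx | |].
  - intros t Ht. rewrite !Q_eq, pow1, pow_i by (exact Ht || lia). ring.
  - auto_derive. now repeat split; apply Q_slice.
Qed.

Definition dPdx (x y : R) : R := fpoly (fun l => Derive (e l)) L x (y ^ n) + Derive p1 x * y.
Definition dPdy (x y : R) : R := fpoly_ds e L x (y ^ n) * (INR n * y ^ pred n) + p1 x.
Definition dQdx (x y : R) : R := Derive q x * y ^ n + Derive q0 x.
Definition dQdy (x y : R) : R := q x * (INR n * y ^ pred n).
Definition jac (x y : R) : R := dPdx x y * dQdy x y - dPdy x y * dQdx x y.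

Lemma is_derive_P_along (Y : R -> R) (x dY : R) :
  I x -> is_derive Y x dY ->
  is_derive (fun t => P t (Y t)) x (dPdx x (Y x) + dPdy x (Y x) * dY).
Proof.
  intros Hx HY.
  apply (is_derive_ext_interval a b (fun t => fpoly e L t (Y t ^ n) + p1 t * Y t));
    [exact Hx | intros t Ht; symmetry; now apply P_eq |].
  replace (dPdx x (Y x) + dPdy x (Y x) * dY) with
    ((fpoly (fun l => Derive (e l)) L x (Y x ^ n)
      + fpoly_ds e L x (Y x ^ n) * (INR n * dY * Y x ^ pred n))
     + (Derive p1 x * Y x + p1 x * dY)) by (unfold dPdx, dPdy; ring).
  apply (is_derive_plus (fun t => fpoly e L t (Y t ^ n))).
  - apply is_derive_fpoly_comp; [intros l Hl; now apply coef_ex_derive | now apply is_derive_pow].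
  - apply (is_derive_mult p1 Y);
      [now apply Derive_correct, p1_ex_derive | exact HY | apply Rmult_comm].
Qed.

Lemma is_derive_Q_along (Y : R -> R) (x dY : R) :
  I x -> is_derive Y x dY ->
  is_derive (fun t => Q t (Y t)) x (dQdx x (Y x) + dQdy x (Y x) * dY).
Proof.
  intros Hx HY.
  apply (is_derive_ext_interval a b (fun t => q t * Y t ^ n + q0 t));
    [exact Hx | intros t Ht; symmetry; now apply Q_eq |].
  replace (dQdx x (Y x) + dQdy x (Y x) * dY) with
    ((Derive q x * Y x ^ n + q x * (INR n * dY * Y x ^ pred n)) + Derive q0 x)
    by (unfold dQdx, dQdy; ring).
  apply (is_derive_plus (fun t => q t * Y t ^ n)); [| now apply Derive_correct, q0_ex_derive].
  apply (is_derive_mult q (fun t => Y t ^ n));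
    [now apply Derive_correct, q_ex_derive | now apply is_derive_pow | apply Rmult_comm].
Qed.

Lemma is_derive_P_y (x y : R) : I x -> is_derive (fun t => P x t) y (dPdy x y).
Proof.
  intros Hx.
  apply (is_derive_ext (fun t => fpoly e L x (t ^ n) + p1 x * t));
    [intros t; symmetry; now apply P_eq |].
  replace (dPdy x y) with (INR n * 1 * y ^ pred n * fpoly_ds e L x (y ^ n) + p1 x * 1)
    by (unfold dPdy; ring).
  apply (is_derive_plus (fun t => fpoly e L x (t ^ n))).
  - apply (is_derive_comp (fun s => fpoly e L x s) (fun t => t ^ n));
      [apply is_derive_fpoly_s | apply is_derive_pow, (is_derive_id (K := R_AbsRing))].
  - apply is_derive_scal, (is_derive_id (K := R_AbsRing)).
Qed.

Lemma is_derive_Q_y (x y : R) : I x -> is_derive (fun t => Q x t) y (dQdy x y).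
Proof.
  intros Hx.
  apply (is_derive_ext (fun t => q x * t ^ n + q0 x)); [intros t; symmetry; now apply Q_eq |].
  replace (dQdy x y) with (q x * (INR n * 1 * y ^ pred n) + 0) by (unfold dQdy; ring).
  apply (is_derive_plus (fun t => q x * t ^ n)); [| apply (is_derive_const (V := R_NormedModule))].
  apply is_derive_scal, is_derive_pow, (is_derive_id (K := R_AbsRing)).
Qed.

Lemma jacobian_det_eq (x y : R) : I x -> jacobian_det P Q x y = jac x y.
Proof.
  intros Hx.
  assert (HPx : Derive (fun t => P t y) x = dPdx x y).
  { apply is_derive_unique. replace (dPdx x y) with (dPdx x y + dPdy x y * 0) by ring.
    apply (is_derive_P_along (fun _ => y));
      [exact Hx | apply (is_derive_const (V := R_NormedModule))]. }
  assert (HQx : Derive (fun t => Q t y) x = dQdx x y).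
  { apply is_derive_unique. replace (dQdx x y) with (dQdx x y + dQdy x y * 0) by ring.
    apply (is_derive_Q_along (fun _ => y));
      [exact Hx | apply (is_derive_const (V := R_NormedModule))]. }
  assert (HPy : Derive (fun t => P x t) y = dPdy x y)
    by exact (is_derive_unique _ _ _ (is_derive_P_y x y Hx)).
  assert (HQy : Derive (fun t => Q x t) y = dQdy x y)
    by exact (is_derive_unique _ _ _ (is_derive_Q_y x y Hx)).
  unfold jacobian_det, jac. now rewrite HPx, HQx, HPy, HQy.
Qed.

Definition W (x s : R) : R :=
  p1 x * Derive q0 x + (p1 x * Derive q x - INR n * q x * Derive p1 x) * s.

Lemma jac_at_zero (x : R) : jac x 0 = - p1 x * Derive q0 x.
Proof.
  unfold jac, dPdx, dPdy, dQdx, dQdy.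
  rewrite (pow_i n), (pow_i (pred n)) by lia. ring.
Qed.

Lemma jac_even_part (x y : R) : jac x y + jac x (- y) = -2 * W x (y ^ n).
Proof.
  unfold jac, dPdx, dPdy, dQdx, dQdy, W.
  rewrite pow_even_opp, pow_pred_even_opp, <- (pow_pred_mul y n) by lia. ring.
Qed.

Lemma continuity_jac_y (x y : R) : continuity_pt (fun y => jac x y) y.
Proof.
  assert (Hd : ex_derive (fun y => jac x y) y).
  { unfold jac, dPdx, dPdy, dQdx, dQdy. auto_derive.
    repeat split; [exists (fpoly_ds (fun l => Derive (e l)) L x (y ^ n)); apply is_derive_fpoly_s |
                   apply ex_derive_fpoly_ds]. }
  destruct Hd as [l Hl]. exact (continuity_pt_is_derive _ _ _ Hl).
Qed.

Hypothesis jac_nz : forall x y, I x -> jac x y <> 0.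

Lemma jac_same_sign (x y z : R) : I x -> 0 < jac x y * jac x z.
Proof.
  intros Hx. apply (continuous_nonzero_same_sign (fun y => jac x y)).
  - intros t. apply continuity_jac_y.
  - intros t. now apply jac_nz.
Qed.

Lemma W_same_sign (x s : R) : I x -> 0 <= s -> 0 < W x s * (p1 x * Derive q0 x).
Proof.
  intros Hx Hs. set (y := nth_root n s).
  assert (Hys : y ^ n = s) by (apply pow_nth_root; lia || lra).
  pose proof (jac_same_sign x y 0 Hx) as Hpos.
  pose proof (jac_same_sign x (- y) 0 Hx) as Hneg.
  pose proof (jac_even_part x y) as Heven.
  rewrite jac_at_zero in Hpos, Hneg. rewrite Hys in Heven.
  nra.
Qed.

Lemma q0_derive_nz (x : R) : I x -> Derive q0 x <> 0.
Proof.
  intros Hx Hq0. apply (jac_nz x 0 Hx). rewrite jac_at_zero, Hq0. ring.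
Qed.

Lemma q0_derive_same_sign (x z : R) : I x -> I z -> 0 < Derive q0 x * Derive q0 z.
Proof.
  apply (derive_nonzero_same_sign q0 (Derive q0) I).
  - intros u w t Hu Hw Ht. exact (in_open_interval_between a b u w t Hu Hw Ht).
  - intros t Ht. now apply Derive_correct, q0_ex_derive.
  - exact q0_derive_nz.
Qed.

Lemma P_Q_injective_vertical (x y1 y2 : R) :
  I x -> P x y1 = P x y2 -> Q x y1 = Q x y2 -> y1 = y2.
Proof.
  intros Hx HP HQ. destruct (Req_dec (q x) 0) as [Hq | Hq].
  - (* [dQdy] vanishes on this line, so [jac <> 0] makes [P x] strictly monotone *)
    assert (HPy : forall t, dPdy x t <> 0).
    { intros t Ht. apply (jac_nz x t Hx). unfold jac, dQdy. rewrite Ht, Hq. ring. }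
    destruct (MVT_gen (fun t => P x t) y1 y2 (dPdy x)) as [t [_ Hmvt]].
    + intros t _. now apply is_derive_P_y.
    + intros t _. eapply continuity_pt_is_derive, is_derive_P_y, Hx.
    + rewrite HP, Rminus_diag in Hmvt. specialize (HPy t). nra.
  - rewrite !Q_eq in HQ by exact Hx.
    assert (Hpow : y1 ^ n = y2 ^ n) by (apply (Rmult_eq_reg_l (q x)); [lra | exact Hq]).
    assert (Habs : Rabs y1 = Rabs y2).
    { rewrite <- (nth_root_pow n (Rabs y1)), <- (nth_root_pow n (Rabs y2))
        by (lia || apply Rabs_pos).
      now rewrite !pow_even_abs, Hpow. }
    assert (Hy : y2 = y1 \/ y2 = - y1)
      by (unfold Rabs in Habs; destruct (Rcase_abs y1), (Rcase_abs y2); lra).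
    destruct Hy as [-> | Hy]; [reflexivity |].
    rewrite !P_eq, Hy, pow_even_opp in HP by exact Hx.
    pose proof (p1_nz x Hx). nra.
Qed.

Definition ratio (x : R) : R := q x / p1 x ^ n.
Definition level (t x : R) : R := ratio x * t + q0 x.

Lemma Q_eq_level (x y : R) : I x -> Q x y = level ((p1 x * y) ^ n) x.
Proof.
  intros Hx. unfold level, ratio. rewrite Q_eq, Rpow_mult_distr by exact Hx.
  field. now apply pow_nonzero, p1_nz.
Qed.

Lemma is_derive_ratio (x : R) : I x ->
  is_derive ratio x ((Derive q x * p1 x - INR n * q x * Derive p1 x) / p1 x ^ S n).
Proof.
  intros Hx. pose proof (p1_nz x Hx) as Hp1. unfold ratio.
  replace ((Derive q x * p1 x - INR n * q x * Derive p1 x) / p1 x ^ S n) with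
    ((Derive q x * p1 x ^ n - q x * (INR n * Derive p1 x * p1 x ^ pred n)) / (p1 x ^ n) ^ 2).
  - apply is_derive_div; [now apply Derive_correct, q_ex_derive | | now apply pow_nonzero].
    now apply is_derive_pow, Derive_correct, p1_ex_derive.
  - change (p1 x ^ S n) with (p1 x * p1 x ^ n).
    rewrite <- (pow_pred_mul (p1 x) n) by lia.
    field. split; [now apply pow_nonzero | exact Hp1].
Qed.

Lemma level_derive_W (t x : R) : I x ->
  (Derive ratio x * t + Derive q0 x) * p1 x = W x (t / p1 x ^ n).
Proof.
  intros Hx. pose proof (p1_nz x Hx) as Hp1.
  rewrite (is_derive_unique _ _ _ (is_derive_ratio x Hx)). unfold W.
  change (p1 x ^ S n) with (p1 x * p1 x ^ n).
  field. split; [now apply pow_nonzero | exact Hp1].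
Qed.

Lemma level_strict_mono (t u w z : R) :
  0 <= t -> I u -> I w -> I z -> u < w -> 0 < Derive q0 z * (level t w - level t u).
Proof.
  intros Ht Hu Hw Hz Huw.
  assert (Hin : forall s, u <= s <= w -> I s)
    by (intros s; exact (in_open_interval_between a b u w s Hu Hw)).
  assert (Hd : forall s, u <= s <= w -> is_derive (level t) s (Derive ratio s * t + Derive q0 s)).
  { intros s Hs. unfold level. auto_derive.
    - split; [eexists; now apply is_derive_ratio, Hin |].
      split; [now apply q0_ex_derive, Hin | trivial].
    - rewrite !Rmult_1_l. reflexivity. }
  apply (strict_mono_derive_sign (level t) (fun s => Derive ratio s * t + Derive q0 s));
    [exact Huw | | |].
  - intros s Hs. apply Hd. lra.
  - intros s Hs. eapply continuity_pt_is_derive, Hd, Hs.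
  - intros s Hs. assert (HsI : I s) by (apply Hin; lra).
    pose proof (p1_nz s HsI) as Hp1.
    assert (Hnn : 0 <= t / p1 s ^ n).
    { apply Rdiv_le_0_compat; [exact Ht |].
      pose proof (pow_even_nonneg (p1 s) h). pose proof (pow_nonzero (p1 s) n Hp1). lra. }
    pose proof (W_same_sign s _ HsI Hnn) as HW. rewrite <- level_derive_W in HW by exact HsI.
    pose proof (q0_derive_same_sign z s Hz HsI). nra.
Qed.

Section LevelCurve.

Variables (x1 y1 x2 y2 : R).
Hypothesis x1_in : I x1.
Hypothesis x2_in : I x2.
Hypothesis x1_lt_x2 : x1 < x2.
Hypothesis Q_same : Q x1 y1 = Q x2 y2.

Let c := Q x1 y1.
Let t1 := (p1 x1 * y1) ^ n.
Let t2 := (p1 x2 * y2) ^ n.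
Let eps := Derive q0 x1.

Lemma between_in (x : R) : x1 <= x <= x2 -> I x.
Proof. exact (in_open_interval_between a b x1 x2 x x1_in x2_in). Qed.

Lemma level_t1_x1 : level t1 x1 = c.
Proof. unfold c. now rewrite (Q_eq_level x1 y1 x1_in). Qed.

Lemma level_t2_x2 : level t2 x2 = c.
Proof. unfold c. now rewrite Q_same, (Q_eq_level x2 y2 x2_in). Qed.

Lemma level_t1_after (x : R) : x1 < x <= x2 -> 0 < eps * (level t1 x - c).
Proof.
  intros Hx. rewrite <- level_t1_x1.
  apply level_strict_mono;
    [apply pow_even_nonneg | exact x1_in | apply between_in; lra | exact x1_in | lra].
Qed.

Lemma level_t2_before (x : R) : x1 <= x < x2 -> 0 < eps * (c - level t2 x).
Proof.
  intros Hx. rewrite <- level_t2_x2.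
  apply level_strict_mono;
    [apply pow_even_nonneg | apply between_in; lra | exact x2_in | exact x1_in | lra].
Qed.

Lemma ratio_gap (x : R) : x1 <= x <= x2 -> 0 < eps * ratio x * (t1 - t2).
Proof.
  intros Hx.
  replace (eps * ratio x * (t1 - t2)) with (eps * (level t1 x - c) + eps * (c - level t2 x))
    by (unfold level; ring).
  destruct (Req_dec x x1) as [-> | Hx1].
  { rewrite level_t1_x1, Rminus_diag, Rmult_0_r, Rplus_0_l. apply level_t2_before. lra. }
  destruct (Req_dec x x2) as [-> | Hx2].
  { rewrite level_t2_x2, Rminus_diag, Rmult_0_r, Rplus_0_r. apply level_t1_after. lra. }
  apply Rplus_lt_0_compat; [apply level_t1_after | apply level_t2_before]; lra.
Qed.

Lemma ratio_nz (x : R) : x1 <= x <= x2 -> ratio x <> 0.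
Proof. intros Hx Hr. pose proof (ratio_gap x Hx) as Hgap. rewrite Hr in Hgap. lra. Qed.

(* Over [[x1, x2]] the level set [Q = c] is the graph [t = tau x] in the coordinate
   [t = (p1 x * y) ^ n]. *)
Let tau (x : R) : R := (c - q0 x) / ratio x.

Lemma level_tau (x : R) : x1 <= x <= x2 -> level (tau x) x = c.
Proof. intros Hx. unfold level, tau. field. now apply ratio_nz. Qed.

Lemma tau_x1 : tau x1 = t1.
Proof. unfold tau. rewrite <- level_t1_x1. unfold level. field. apply ratio_nz. lra. Qed.

Lemma tau_x2 : tau x2 = t2.
Proof. unfold tau. rewrite <- level_t2_x2. unfold level. field. apply ratio_nz. lra. Qed.

Lemma tau_pos (x : R) : x1 < x < x2 -> 0 < tau x.
Proof.
  intros Hx.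
  assert (Hup : 0 < eps * ratio x * (t1 - tau x)).
  { replace (eps * ratio x * (t1 - tau x)) with (eps * (level t1 x - level (tau x) x))
      by (unfold level; ring).
    rewrite level_tau by lra. apply level_t1_after. lra. }
  assert (Hlow : 0 < eps * ratio x * (tau x - t2)).
  { replace (eps * ratio x * (tau x - t2)) with (eps * (level (tau x) x - level t2 x))
      by (unfold level; ring).
    rewrite level_tau by lra. apply level_t2_before. lra. }
  assert (0 <= t1) by apply pow_even_nonneg.
  assert (0 <= t2) by apply pow_even_nonneg.
  set (k := eps * ratio x) in *.
  destruct (Rtotal_order k 0) as [Hk | [Hk | Hk]]; [nra | rewrite Hk in Hup; lra | nra].
Qed.

Lemma tau_nonneg (x : R) : x1 <= x <= x2 -> 0 <= tau x.
Proof.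
  intros Hx.
  destruct (Req_dec x x1) as [-> | Hx1]; [rewrite tau_x1; apply pow_even_nonneg |].
  destruct (Req_dec x x2) as [-> | Hx2]; [rewrite tau_x2; apply pow_even_nonneg |].
  left. apply tau_pos. lra.
Qed.

Lemma ex_derive_tau (x : R) : x1 <= x <= x2 -> ex_derive tau x.
Proof.
  intros Hx. unfold tau. auto_derive.
  repeat split;
    [now apply q0_ex_derive, between_in | eexists; now apply is_derive_ratio, between_in |
     now apply ratio_nz].
Qed.

Let v (x : R) : R := nth_root n (tau x).
Let G (x : R) : R := fpoly e L x (tau x / p1 x ^ n).
Let branch (sg x : R) : R := sg * v x / p1 x.
Let branch_slope (sg x : R) : R :=
  dPdx x (branch sg x) + dPdy x (branch sg x) * Derive (branch sg) x.

Lemma branch_pow (sg x : R) : sg * sg = 1 -> x1 <= x <= x2 -> branch sg x ^ n = tau x / p1 x ^ n.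
Proof.
  intros Hsg Hx. pose proof (p1_nz x (between_in x Hx)) as Hp1.
  unfold branch. rewrite pow_sqr.
  replace (sg * v x / p1 x * (sg * v x / p1 x)) with ((sg * sg) * (v x / p1 x * (v x / p1 x)))
    by (field; exact Hp1).
  rewrite Hsg, Rmult_1_l.
  rewrite <- pow_sqr. unfold Rdiv. rewrite Rpow_mult_distr, pow_inv. unfold v.
  now rewrite pow_nth_root by (lia || now apply tau_nonneg).
Qed.

Lemma P_branch (sg x : R) : sg * sg = 1 -> x1 <= x <= x2 -> P x (branch sg x) = G x + sg * v x.
Proof.
  intros Hsg Hx. pose proof (between_in x Hx) as HxI.
  rewrite P_eq, branch_pow by assumption. unfold G, branch. field. now apply p1_nz.
Qed.

Lemma Q_branch (sg x : R) : sg * sg = 1 -> x1 <= x <= x2 -> Q x (branch sg x) = c.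
Proof.
  intros Hsg Hx. pose proof (between_in x Hx) as HxI.
  rewrite Q_eq, branch_pow, <- (level_tau x Hx) by assumption. unfold level, ratio.
  field. now apply pow_nonzero, p1_nz.
Qed.

Lemma continuity_branch_value (sg x : R) :
  x1 <= x <= x2 -> continuity_pt (fun t => G t + sg * v t) x.
Proof.
  intros Hx. pose proof (between_in x Hx) as HxI.
  apply continuity_pt_plus; [| apply continuity_pt_scal].
  - destruct (ex_derive_tau x Hx) as [dtau Hdtau].
    assert (Hs : ex_derive (fun t => tau t / p1 t ^ n) x).
    { auto_derive.
      repeat split; [now exists dtau | now apply p1_ex_derive | now apply pow_nonzero, p1_nz]. }
    destruct Hs as [ds Hds].
    eapply continuity_pt_is_derive, (is_derive_fpoly_comp e L x _ ds); [| exact Hds].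
    intros l Hl. now apply coef_ex_derive.
  - apply (continuity_pt_comp tau (nth_root n)).
    + destruct (ex_derive_tau x Hx) as [dtau Hdtau]. exact (continuity_pt_is_derive _ _ _ Hdtau).
    + apply continuity_nth_root; [lia | now apply tau_nonneg].
Qed.

Lemma ex_derive_branch (sg x : R) : x1 < x < x2 -> ex_derive (branch sg) x.
Proof.
  intros Hx. pose proof (between_in x ltac:(lra)) as HxI.
  unfold branch, v. auto_derive.
  repeat split; [apply ex_derive_nth_root, tau_pos; lra | apply ex_derive_tau; lra |
                 now apply p1_ex_derive | now apply p1_nz].
Qed.

Lemma is_derive_branch_value (sg x : R) :
  sg * sg = 1 -> x1 < x < x2 -> is_derive (fun t => G t + sg * v t) x (branch_slope sg x).
Proof.
  intros Hsg Hx. pose proof (between_in x ltac:(lra)) as HxI.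
  apply (is_derive_ext_interval x1 x2 (fun t => P t (branch sg t))); [split; simpl; lra | |].
  - intros t [Ht1 Ht2]. simpl in Ht1, Ht2. apply P_branch; [exact Hsg | lra].
  - apply is_derive_P_along; [exact HxI |]. now apply Derive_correct, ex_derive_branch.
Qed.

Lemma branch_slope_jac (sg x : R) :
  sg * sg = 1 -> x1 < x < x2 -> dQdy x (branch sg x) * branch_slope sg x = jac x (branch sg x).
Proof.
  intros Hsg Hx. pose proof (between_in x ltac:(lra)) as HxI.
  assert (HdQ : dQdx x (branch sg x) + dQdy x (branch sg x) * Derive (branch sg) x = 0).
  { assert (Hconst : is_derive (fun t => Q t (branch sg t)) x 0).
    { apply (is_derive_ext_interval x1 x2 (fun _ => c)); [split; simpl; lra | |].
      - intros t [Ht1 Ht2]. simpl in Ht1, Ht2. symmetry. apply Q_branch; [exact Hsg | lra].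
      - apply (is_derive_const (V := R_NormedModule)). }
    pose proof (is_derive_Q_along (branch sg) x _ HxI
                  (Derive_correct _ _ (ex_derive_branch sg x Hx))) as Halong.
    rewrite <- (is_derive_unique _ _ _ Halong). exact (is_derive_unique _ _ _ Hconst). }
  unfold jac, branch_slope. nra.
Qed.

Lemma branch_slopes_opposite (x : R) : x1 < x < x2 -> branch_slope 1 x * branch_slope (-1) x < 0.
Proof.
  intros Hx. pose proof (between_in x ltac:(lra)) as HxI.
  assert (Hopp : branch (-1) x = - branch 1 x). { unfold branch. lra. }
  assert (HdQ : dQdy x (branch (-1) x) = - dQdy x (branch 1 x))
    by (rewrite Hopp; unfold dQdy; rewrite pow_pred_even_opp by lia; ring).
  pose proof (branch_slope_jac 1 x ltac:(ring) Hx) as Hplus.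
  pose proof (branch_slope_jac (-1) x ltac:(ring) Hx) as Hminus.
  pose proof (jac_same_sign x (branch 1 x) (branch (-1) x) HxI) as Hsign.
  rewrite <- Hplus, <- Hminus, HdQ in Hsign. nra.
Qed.

Lemma P_endpoint (x y : R) :
  x1 <= x <= x2 -> tau x = (p1 x * y) ^ n -> P x y = G x + v x \/ P x y = G x - v x.
Proof.
  intros Hx Htau. pose proof (between_in x Hx) as HxI. pose proof (p1_nz x HxI) as Hp1.
  assert (Hv : v x = Rabs (p1 x * y))
    by (unfold v; rewrite Htau, <- pow_even_abs; apply nth_root_pow; [lia | apply Rabs_pos]).
  assert (HG : G x = fpoly e L x (y ^ n))
    by (unfold G; rewrite Htau, Rpow_mult_distr; f_equal; field; now apply pow_nonzero).
  rewrite P_eq, Hv, HG by exact HxI.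
  unfold Rabs. destruct Rcase_abs; [right | left]; ring.
Qed.

Lemma no_collision : P x1 y1 = P x2 y2 -> False.
Proof.
  intros HP.
  set (inside := fun x => x1 < x < x2).
  set (mid := (x1 + x2) / 2).
  assert (Hmid : x1 < mid < x2) by (unfold mid; lra).
  assert (Hmono : forall sg, sg = 1 \/ sg = -1 ->
            0 < branch_slope sg mid * ((G x2 + sg * v x2) - (G x1 + sg * v x1))).
  { intros sg Hsg. assert (Hsg2 : sg * sg = 1) by (destruct Hsg as [-> | ->]; ring).
    apply (strict_mono_derive_sign (fun t => G t + sg * v t) (branch_slope sg));
      [exact x1_lt_x2 | | |].
    - intros x Hx. now apply is_derive_branch_value.
    - intros x Hx. now apply continuity_branch_value.
    - intros x Hx. apply (derive_nonzero_same_sign (fun t => G t + sg * v t) _ inside);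
        [unfold inside; intros; lra | | | exact Hmid | exact Hx].
      + intros t Ht. now apply is_derive_branch_value.
      + intros t Ht Hz. pose proof (branch_slopes_opposite t Ht).
        destruct Hsg as [-> | ->]; rewrite Hz in *; lra. }
  pose proof (branch_slopes_opposite mid Hmid) as Hopp.
  pose proof (Hmono 1 (or_introl eq_refl)) as Hplus.
  pose proof (Hmono (-1) (or_intror eq_refl)) as Hminus.
  assert (Hv1 : 0 <= v x1) by apply nth_root_nonneg.
  assert (Hv2 : 0 <= v x2) by apply nth_root_nonneg.
  assert (Hdirs : (G x1 + v x1 < G x2 + v x2 /\ G x2 - v x2 < G x1 - v x1) \/
                  (G x2 + v x2 < G x1 + v x1 /\ G x1 - v x1 < G x2 - v x2)).
  { set (sp := branch_slope 1 mid) in *. set (sm := branch_slope (-1) mid) in *.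
    clear - Hopp Hplus Hminus.
    clearbody sp sm G v.
    destruct (Rlt_or_le 0 sp) as [Hs | Hs]; [left | right].
    - assert (sm < 0) by nra. split; nra.
    - assert (0 < sm) by nra. split; nra. }
  destruct (P_endpoint x1 y1 ltac:(lra) tau_x1) as [E1 | E1];
  destruct (P_endpoint x2 y2 ltac:(lra) tau_x2) as [E2 | E2]; lra.
Qed.

End LevelCurve.

Lemma strip_injective (x1 y1 x2 y2 : R) :
  I x1 -> I x2 -> P x1 y1 = P x2 y2 -> Q x1 y1 = Q x2 y2 -> x1 = x2 /\ y1 = y2.
Proof.
  intros Hx1 Hx2 HP HQ.
  destruct (Rtotal_order x1 x2) as [Hlt | [<- | Hgt]].
  - exfalso. exact (no_collision x1 y1 x2 y2 Hx1 Hx2 Hlt HQ HP).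
  - split; [reflexivity | exact (P_Q_injective_vertical x1 y1 y2 Hx1 HP HQ)].
  - exfalso. exact (no_collision x2 y2 x1 y1 Hx2 Hx1 Hgt (eq_sym HQ) (eq_sym HP)).
Qed.

End Strip.

Lemma fpoly_even_powers (p : nat -> R -> R) (p0 : R -> R) (h L : nat) (x y : R) :
  (1 <= L)%nat ->
  sum_f_R0 (fun k => p (S k) x * y ^ (2 * h * S k)) (L - 1) + p0 x
  = fpoly (fun l => match l with O => p0 | S k => p (S k) end) L x (y ^ (2 * h)).
Proof.
  intros HL. unfold fpoly. rewrite (decomp_sum _ L) by lia.
  replace (pred L) with (L - 1)%nat by lia. simpl. rewrite Rmult_1_r, Rplus_comm.
  f_equal. apply sum_eq. intros k _. now rewrite pow_mult.
Qed.

Theorem theorem3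
  (a b : Rbar) (Hab : Rbar_lt a b)
  (h L : nat) (Hh : (1 <= h)%nat) (HL : (1 <= L)%nat)
  (p : nat -> R -> R)        (* p l = p_{2hl}, used for l = 1..L *)
  (p1 p0 q2h q0 : R -> R)
  (P Q : R -> R -> R)        (* F = (P, Q) *)
  (HP : forall x y, in_open_interval a b x ->
          P x y = sum_f_R0 (fun k => p (S k) x * y ^ (2 * h * S k)) (L - 1)
                  + p1 x * y + p0 x)
  (HQ : forall x y, in_open_interval a b x ->
          Q x y = q2h x * y ^ (2 * h) + q0 x)
  (HPan : analytic_on_strip a b P)
  (HQan : analytic_on_strip a b Q)
  (Hnonsing : forall x y, in_open_interval a b x -> jacobian_det P Q x y <> 0)
  (Hp1 : forall x, in_open_interval a b x -> p1 x <> 0) :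
  forall x1 y1 x2 y2,
    in_open_interval a b x1 -> in_open_interval a b x2 ->
    P x1 y1 = P x2 y2 -> Q x1 y1 = Q x2 y2 ->
    x1 = x2 /\ y1 = y2.
Proof.
  set (e := fun l => match l with O => p0 | S k => p (S k) end).
  assert (HP' : forall x y, in_open_interval a b x -> P x y = fpoly e L x (y ^ (2 * h)) + p1 x * y).
  { intros x y Hx. unfold e. rewrite HP, <- fpoly_even_powers by assumption. ring. }
  assert (HPslice : forall x y, in_open_interval a b x -> ex_derive (fun t => P t y) x)
    by (intros x y Hx; apply analytic2_at_ex_derive_slice, HPan, Hx).
  assert (HQslice : forall x y, in_open_interval a b x -> ex_derive (fun t => Q t y) x)
    by (intros x y Hx; apply analytic2_at_ex_derive_slice, HQan, Hx).
  apply (strip_injective a b h L e p1 q2h q0 P Q Hh HP' HQ Hp1 HPslice HQslice).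
  intros x y Hx. rewrite <- (jacobian_det_eq a b h L e p1 q2h q0 P Q); auto.
Qed.
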